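(* Let $X\subseteq \mathbb{P}^1\times\mathbb{P}^1\times\mathbb{P}^1$ be a variety of lines such that, for each $h=1,2,3$, $U_h(X)$ resembles a Ferrers diagram. Then $X$ has the $Hyp_6(\star)$-property if and only if for all $a_1,a_2\in[d_1]$, $b_1,b_2\in[d_2]$, $c_1,c_2\in[d_3]$, $$\text{either }\left(\begin{array}{cc}\mu_{a_1b_1c_1} & \mu_{a_1b_2c_1}\\ \mu_{a_2b_1c_1} & \mu_{a_2b_2c_1}\end{array}\right)\neq\left(\begin{array}{cc}3&2\\2&2\end{array}\right)\ \text{or}\ \left(\begin{array}{cc}\mu_{a_1b_1c_2} & \mu_{a_1b_2c_2}\\ \mu_{a_2b_1c_2} & \mu_{a_2b_2c_2}\end{array}\right)\neq\left(\begin{array}{cc}2&2\\2&3\end{array}\right).$$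
   Context: $R=K[x_{1,0},x_{1,1},x_{2,0},x_{2,1},x_{3,0},x_{3,1}]$ ($K$ algebraically closed, characteristic zero) trigraded by $\deg x_{i,j}=\mathbf e_i$, coordinate ring of $\mathbb{P}^1\times\mathbb{P}^1\times\mathbb{P}^1$. A variety of lines is written $X= \bigcup_{(i,j)\in U_3(X)} \mathcal{L}(A_i,B_j)\cup\bigcup_{(i,k)\in U_2(X)} \mathcal{L}(A_i,C_k)\cup \bigcup_{(j,k)\in U_1(X)} \mathcal{L}(B_j,C_k)$, where $\mathcal L(A_1),\ldots,\mathcal L(A_{d_1})$, $\mathcal L(B_1),\ldots,\mathcal L(B_{d_2})$, $\mathcal L(C_1),\ldots,\mathcal L(C_{d_3})$ are the distinct hyperplanes containing some line of $X$, defined by linear forms of degrees $(1,0,0),(0,1,0),(0,0,1)$ respectively, $\mathcal L(F,G)$ is the line defined by $(F,G)$, $U_3(X)\subseteq[d_1]\times[d_2]$, $U_2(X)\subseteq[d_1]\times[d_3]$, $U_1(X)\subseteq[d_2]\times[d_3]$, $[n]=\{1,\dots,n\}$. $U_h(X)$ resembles a Ferrers diagram if after permuting each of its two index sets it becomes a set $U$ with: $(u,v)\in U\Rightarrow (u',v')\in U$ for all $1\le u'\le u$, $1\le v'\le v$. For $P_{ijk}=\mathcal L(A_i)\cap\mathcal L(B_j)\cap\mathcal L(C_k)$, the multiplicity $\mu_{ijk}$ is the number of lines of $X$ passing through $P_{ijk}$ (equivalently the number of the lines $\mathcal L(A_i,B_j),\mathcal L(A_i,C_k),\mathcal L(B_j,C_k)$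 that belong to $X$). $X$ has the $Hyp_6(\star)$-property if for any $6$ hyperplanes $H_1,\ldots,H_6$ (each defined by a linear form of degree some $\mathbf e_i$) such that $\mathcal{L}(H_i,H_j)$ is a line of $X$ for all $j\neq i-1,i,i+1$ (indices modulo $6$), there is $u$ with $\mathcal{L}(H_u,H_{u+1})$ a line of $X$. *)

From mathcomp Require Import all_boot all_order all_algebra.
From mathcomp Require Import perm.
Set Implicit Arguments. Unset Strict Implicit. Unset Printing Implicit Defensive.
Import GRing.Theory.
Local Open Scope ring_scope.

Section Lines.
Variable K : fieldType.

(* A point of P^1 x P^1 x P^1, given by homogeneous coordinates:
   p i = (x_{i,0}, x_{i,1}) for i in {0,1,2} (factors 1,2,3 of the paper),
   each coordinate pair nonzero. *)
Definition point := 'I_3 -> (K * K).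
Definition valid_point (p : point) : Prop := forall i, p i != (0, 0).

(* A linear form of degree e_i : a x_{i,0} + b x_{i,1}. *)
Record linform := LinForm { lf_idx : 'I_3; lf_a : K; lf_b : K }.
Definition lf_nonzero (F : linform) : Prop := (lf_a F, lf_b F) != (0, 0).

Definition Lhyp (F : linform) (p : point) : Prop :=
  valid_point p /\ lf_a F * (p (lf_idx F)).1 + lf_b F * (p (lf_idx F)).2 = 0.

Definition L2 (F G : linform) (p : point) : Prop := Lhyp F p /\ Lhyp G p.

Definition same_set (S T : point -> Prop) : Prop := forall p, S p <-> T p.

Definition i1 : 'I_3 := @Ordinal 3 0 isT.
Definition i2 : 'I_3 := @Ordinal 3 1 isT.
Definition i3 : 'I_3 := @Ordinal 3 2 isT.

(* Data of a variety of lines X: the hyperplanes L(A_1..A_d1), L(B_1..B_d2),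
   L(C_1..C_d3) (coefficient pairs of forms of degree e_1, e_2, e_3),
   and the index sets U_3(X), U_2(X), U_1(X). *)
Record lines_data := LinesData {
  d1 : nat; d2 : nat; d3 : nat;
  Acoef : 'I_d1 -> K * K; Bcoef : 'I_d2 -> K * K; Ccoef : 'I_d3 -> K * K;
  U3 : {set 'I_d1 * 'I_d2};
  U2 : {set 'I_d1 * 'I_d3};
  U1 : {set 'I_d2 * 'I_d3} }.

Variable X : lines_data.

Definition Aform (i : 'I_(d1 X)) := LinForm i1 (@Acoef X i).1 (@Acoef X i).2.
Definition Bform (j : 'I_(d2 X)) := LinForm i2 (@Bcoef X j).1 (@Bcoef X j).2.
Definition Cform (k : 'I_(d3 X)) := LinForm i3 (@Ccoef X k).1 (@Ccoef X k).2.

(* proportionality of coefficient pairs = same hyperplane *)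
Definition proportional (u v : K * K) : bool := u.1 * v.2 == u.2 * v.1.

Definition wf_lines : Prop :=
  (forall i, lf_nonzero (Aform i)) /\ (forall j, lf_nonzero (Bform j)) /\
  (forall k, lf_nonzero (Cform k)) /\
  (forall i i', i != i' -> ~~ proportional (@Acoef X i) (@Acoef X i')) /\
  (forall j j', j != j' -> ~~ proportional (@Bcoef X j) (@Bcoef X j')) /\
  (forall k k', k != k' -> ~~ proportional (@Ccoef X k) (@Ccoef X k')) /\
  (forall i, (exists j, (i, j) \in U3 X) \/ (exists k, (i, k) \in U2 X)) /\
  (forall j, (exists i, (i, j) \in U3 X) \/ (exists k, (j, k) \in U1 X)) /\
  (forall k, (exists i, (i, k) \in U2 X) \/ (exists j, (j, k) \in U1 X)).

Definition is_line_of_X (F G : linform) : Prop :=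
  (exists i j, (i, j) \in U3 X /\ same_set (L2 F G) (L2 (Aform i) (Bform j))) \/
  (exists i k, (i, k) \in U2 X /\ same_set (L2 F G) (L2 (Aform i) (Cform k))) \/
  (exists j k, (j, k) \in U1 X /\ same_set (L2 F G) (L2 (Bform j) (Cform k))).

(* Hyp_6(star): indices of 'I_6 are taken modulo 6. *)
Definition hyp6_star : Prop :=
  forall H : 'I_6 -> linform, (forall u, lf_nonzero (H u)) ->
    (forall i j : 'I_6, j != i -> (j : nat) != (i.+1 %% 6)%N ->
         (i : nat) != (j.+1 %% 6)%N -> is_line_of_X (H i) (H j)) ->
    exists u : 'I_6, is_line_of_X (H u) (H (ordS u)).

Definition mu (i : 'I_(d1 X)) (j : 'I_(d2 X)) (k : 'I_(d3 X)) : nat :=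
  (((i, j) \in U3 X) + ((i, k) \in U2 X) + ((j, k) \in U1 X))%N.

End Lines.

Definition resembles_ferrers (m n : nat) (U : {set 'I_m * 'I_n}) : Prop :=
  exists (s : 'S_m) (t : 'S_n), forall (u u' : 'I_m) (v v' : 'I_n),
    (s u, t v) \in U -> (u' <= u)%N -> (v' <= v)%N -> (s u', t v') \in U.

(* Index the hyperplanes of X by the vertices of a tripartite graph whose edges are
   the lines of X.  Evaluating at well-chosen points shows that a line L(F,G) of X
   determines the hyperplanes L(F) and L(G), so Hyp_6(star) fails exactly when six
   vertices n_0, ..., n_5 are pairwise joined except for cyclically consecutive ones,
   which are not joined.  Such a configuration consists of two triangles a1 b1 c1 and
   a2 b2 c2, one vertex per family, joined by the rungs a1 b2, a2 c1, b1 c2 and not by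
   a2 b1, a1 c2, b2 c1 (or the same with indices 1 and 2 swapped); this is exactly what
   the two multiplicity matrices record. *)

From mathcomp Require Import all_boot all_order all_algebra.
From mathcomp Require Import perm ring.
Set Implicit Arguments. Unset Strict Implicit. Unset Printing Implicit Defensive.
Import GRing.Theory.

Section Hyperplanes.
Variable K : fieldType.
Local Open Scope ring_scope.
Implicit Types (u v w x : K * K) (F G P Q R : linform K).

Definition vanishes u x := u.1 * x.1 + u.2 * x.2 == 0.

Lemma proportional_refl u : proportional u u.
Proof. by rewrite /proportional mulrC. Qed.

Lemma proportional_sym u v : proportional u v = proportional v u.
Proof. by rewrite /proportional eq_sym mulrC [v.2 * _]mulrC. Qed.

Lemma pair_neq0E u : (u != (0, 0)) = (u.1 != 0) || (u.2 != 0).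
Proof. by case: u => a b; rewrite xpair_eqE negb_and. Qed.

Lemma proportional_trans u v w : u != (0, 0) ->
  proportional u v -> proportional u w -> proportional v w.
Proof.
rewrite /proportional pair_neq0E => /orP[] nz /eqP uv /eqP uw;
  rewrite -subr_eq0; apply/eqP; apply: (mulfI nz); rewrite mulr0.
  have -> : u.1 * (v.1 * w.2 - v.2 * w.1) = v.1 * (u.1 * w.2) - (u.1 * v.2) * w.1 by ring.
  by rewrite uw uv; ring.
have -> : u.2 * (v.1 * w.2 - v.2 * w.1) = (u.2 * v.1) * w.2 - v.2 * (u.2 * w.1) by ring.
by rewrite -uv -uw; ring.
Qed.

Lemma proportional_vanishes u v x : u != (0, 0) -> proportional u v ->
  vanishes u x -> vanishes v x.
Proof.
rewrite /proportional /vanishes pair_neq0E => /orP[] nz /eqP uv /eqP ux;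
  apply/eqP; apply: (mulfI nz); rewrite mulr0.
  have -> : u.1 * (v.1 * x.1 + v.2 * x.2) =
            v.1 * (u.1 * x.1 + u.2 * x.2) + (u.1 * v.2 - u.2 * v.1) * x.2 by ring.
  by rewrite ux uv subrr; ring.
have -> : u.2 * (v.1 * x.1 + v.2 * x.2) =
          v.2 * (u.1 * x.1 + u.2 * x.2) + (u.2 * v.1 - u.1 * v.2) * x.1 by ring.
by rewrite ux uv subrr; ring.
Qed.

Definition zero_pt u : K * K := (- u.2, u.1).
Definition off_pt u : K * K := if u.1 == 0 then (0, 1) else (1, 0).

Lemma vanishes_zero_pt u v : vanishes v (zero_pt u) = proportional u v.
Proof.
by rewrite /vanishes /proportional /= mulrN addrC subr_eq0 [v.2 * _]mulrC [v.1 * _]mulrC.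
Qed.

Lemma zero_pt_neq0 u : u != (0, 0) -> zero_pt u != (0, 0).
Proof. by rewrite pair_neq0E /zero_pt xpair_eqE oppr_eq0 negb_and orbC. Qed.

Lemma off_pt_neq0 u : off_pt u != (0, 0).
Proof. by rewrite /off_pt; case: ifP; rewrite xpair_eqE ?oner_eq0 ?andbF. Qed.

Lemma vanishes_off_pt u : u != (0, 0) -> ~~ vanishes u (off_pt u).
Proof.
rewrite /vanishes /off_pt pair_neq0E; case: eqP => [->|] /=.
  by rewrite mul0r mulr1 add0r.
by rewrite mulr1 mulr0 addr0 => /eqP.
Qed.

Definition lf_coef F : K * K := (lf_a F, lf_b F).

Definition same_hplane F P : bool :=
  (lf_idx F == lf_idx P) && proportional (lf_coef F) (lf_coef P).

Lemma same_hplane_refl F : same_hplane F F.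
Proof. by rewrite /same_hplane eqxx proportional_refl. Qed.

Lemma LhypE F p : Lhyp F p <-> valid_point p /\ vanishes (lf_coef F) (p (lf_idx F)).
Proof. by rewrite /Lhyp /vanishes; split=> -[vp /eqP]. Qed.

Lemma Lhyp_same_hplane F P p : lf_nonzero F -> lf_nonzero P -> same_hplane F P ->
  Lhyp F p <-> Lhyp P p.
Proof.
rewrite !LhypE => nzF nzP /andP[/eqP <- FP].
split=> -[vp van]; split=> //; apply: proportional_vanishes van => //.
by rewrite proportional_sym.
Qed.

Lemma L2_same_hplane F G F' G' : lf_nonzero F -> lf_nonzero G ->
  lf_nonzero F' -> lf_nonzero G' -> same_hplane F F' -> same_hplane G G' ->
  same_set (L2 F G) (L2 F' G').
Proof.
move=> nzF nzG nzF' nzG' FF' GG' p.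
by rewrite /L2 (Lhyp_same_hplane p nzF nzF' FF') (Lhyp_same_hplane p nzG nzG' GG').
Qed.

Lemma same_set_L2C F G : same_set (L2 F G) (L2 G F).
Proof. by move=> p; split=> -[]. Qed.

Definition witness P Q R : point K := fun i =>
  if i == lf_idx P then zero_pt (lf_coef P)
  else if i == lf_idx Q then zero_pt (lf_coef Q) else off_pt (lf_coef R).

Lemma witness_valid P Q R : lf_nonzero P -> lf_nonzero Q -> valid_point (witness P Q R).
Proof.
move=> nzP nzQ i; rewrite /witness.
by case: ifP => _; [|case: ifP => _]; rewrite ?zero_pt_neq0 ?off_pt_neq0.
Qed.

Lemma Lhyp_witness_l P Q R : lf_nonzero P -> lf_nonzero Q -> Lhyp P (witness P Q R).
Proof.
move=> nzP nzQ; apply/LhypE; split; first exact: witness_valid.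
by rewrite /witness eqxx vanishes_zero_pt proportional_refl.
Qed.

Lemma Lhyp_witness_r P Q R : lf_nonzero P -> lf_nonzero Q -> lf_idx P != lf_idx Q ->
  Lhyp Q (witness P Q R).
Proof.
move=> nzP nzQ PQ; apply/LhypE; split; first exact: witness_valid.
by rewrite /witness eq_sym (negbTE PQ) eqxx vanishes_zero_pt proportional_refl.
Qed.

Lemma Lhyp_witness P Q R : lf_nonzero R -> Lhyp R (witness P Q R) ->
  same_hplane R P || same_hplane R Q.
Proof.
move=> nzR /LhypE[_]; rewrite /witness /same_hplane.
case: eqP => [_|_]; first by rewrite vanishes_zero_pt proportional_sym => ->.
case: eqP => [_|_]; first by rewrite vanishes_zero_pt proportional_sym => ->; rewrite orbT.
by move=> van; have := vanishes_off_pt nzR; rewrite van.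
Qed.

Lemma L2_subset_Lhyp P Q R : lf_nonzero P -> lf_nonzero Q -> lf_nonzero R ->
  lf_idx P != lf_idx Q -> (forall p, L2 P Q p -> Lhyp R p) ->
  same_hplane R P || same_hplane R Q.
Proof.
move=> nzP nzQ nzR PQ sub; apply: (Lhyp_witness nzR); apply: sub.
by split; [apply: Lhyp_witness_l | apply: Lhyp_witness_r].
Qed.

Lemma Lhyp_not_subset P Q : lf_nonzero P -> lf_nonzero Q -> lf_idx P != lf_idx Q ->
  ~ (forall p, Lhyp P p -> Lhyp Q p).
Proof.
move=> nzP nzQ PQ sub.
have := Lhyp_witness nzQ (sub _ (Lhyp_witness_l Q nzP nzP)).
by rewrite /same_hplane eq_sym (negbTE PQ).
Qed.

Lemma same_L2_same_hplane F G P Q :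
  lf_nonzero F -> lf_nonzero G -> lf_nonzero P -> lf_nonzero Q ->
  lf_idx P != lf_idx Q -> same_set (L2 F G) (L2 P Q) ->
  same_hplane F P && same_hplane G Q || same_hplane F Q && same_hplane G P.
Proof.
move=> nzF nzG nzP nzQ PQ FGPQ.
have sub_F p : L2 P Q p -> Lhyp F p by move=> /FGPQ[].
have sub_G p : L2 P Q p -> Lhyp G p by move=> /FGPQ[].
have not_both S T : lf_nonzero S -> lf_nonzero T -> lf_idx S != lf_idx T ->
    same_set (L2 F G) (L2 S T) -> same_hplane F S -> same_hplane G S -> False.
  move=> nzS nzT ST FGST FS GS; apply: (Lhyp_not_subset nzS nzT ST) => p Sp.
  have [] // : L2 S T p.
  apply/FGST; split.
    exact/(Lhyp_same_hplane p nzF nzS FS).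
  exact/(Lhyp_same_hplane p nzG nzS GS).
have QP : lf_idx Q != lf_idx P by rewrite eq_sym.
have FGQP : same_set (L2 F G) (L2 Q P) by move=> p; rewrite FGPQ; apply: same_set_L2C.
have /orP[FP|FQ] := L2_subset_Lhyp nzP nzQ nzF PQ sub_F;
have /orP[GP|GQ] := L2_subset_Lhyp nzP nzQ nzG PQ sub_G;
  rewrite ?FP ?GP ?FQ ?GQ ?orbT //.
- by case: (not_both P Q nzP nzQ PQ FGPQ FP GP).
- by case: (not_both Q P nzQ nzP QP FGQP FQ GQ).
Qed.

End Hyperplanes.

Section LineGraph.
Variables (K : fieldType) (X : lines_data K).
Hypothesis wfX : wf_lines X.
Implicit Types F G : linform K.

Definition hplane := ('I_(d1 X) + 'I_(d2 X) + 'I_(d3 X))%type.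

Definition hplane_form (x : hplane) : linform K :=
  match x with inl (inl i) => Aform i | inl (inr j) => Bform j | inr k => Cform k end.

Definition lineb (x y : hplane) : bool :=
  match x, y with
  | inl (inl i), inl (inr j) | inl (inr j), inl (inl i) => (i, j) \in U3 X
  | inl (inl i), inr k | inr k, inl (inl i) => (i, k) \in U2 X
  | inl (inr j), inr k | inr k, inl (inr j) => (j, k) \in U1 X
  | _, _ => false
  end.

Lemma lineb_sym x y : lineb x y = lineb y x.
Proof. by case: x => [[]|] ?; case: y => [[]|] ?. Qed.

Lemma lineb_idx x y : lineb x y -> lf_idx (hplane_form x) != lf_idx (hplane_form y).
Proof. by case: x => [[]|] ?; case: y => [[]|] ?. Qed.

Lemma hplane_form_nonzero x : lf_nonzero (hplane_form x).
Proof. by case: wfX => nzA [nzB [nzC _]]; case: x => [[]|]. Qed.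

Lemma is_line_of_XE F G : is_line_of_X X F G <->
  exists x y, lineb x y /\ same_set (L2 F G) (L2 (hplane_form x) (hplane_form y)).
Proof.
split=> [[[i [j []]] | [[i [k []]] | [j [k []]]]] | ].
- by exists (inl (inl i)), (inl (inr j)).
- by exists (inl (inl i)), (inr k).
- by exists (inl (inr j)), (inr k).
have swap S U V : same_set S (L2 U V) -> same_set S (L2 V U).
  by move=> SUV p; rewrite SUV; apply: same_set_L2C.
case=> -[[i|j]|k] [] [[i'|j']|k'] [] //= l FG.
- by left; exists i, j'.
- by right; left; exists i, k'.
- by left; exists i', j; split; last exact: swap.
- by right; right; exists j, k'.
- by right; left; exists i', k; split; last exact: swap.
- by right; right; exists j', k; split; last exact: swap.
Qed.

Lemma same_hplane_form_inj F x y : lf_nonzero F ->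
  same_hplane F (hplane_form x) -> same_hplane F (hplane_form y) -> x = y.
Proof.
case: wfX => _ [_ [_ [dA [dB [dC _]]]]] nzF.
rewrite /same_hplane.
case: x => [[i|j]|k]; case: y => [[i'|j']|k'] /andP[/eqP-> Fx] /andP[//= _ Fy].
- by rewrite (contraTeq (dA i i') (proportional_trans nzF Fx Fy)).
- by rewrite (contraTeq (dB j j') (proportional_trans nzF Fx Fy)).
- by rewrite (contraTeq (dC k k') (proportional_trans nzF Fx Fy)).
Qed.

Lemma is_line_of_X_hplanes F G : lf_nonzero F -> lf_nonzero G -> is_line_of_X X F G ->
  exists x y,
    [/\ same_hplane F (hplane_form x), same_hplane G (hplane_form y) & lineb x y].
Proof.
move=> nzF nzG /is_line_of_XE[x [y [l FGxy]]].
have := same_L2_same_hplane nzF nzG (hplane_form_nonzero x)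
  (hplane_form_nonzero y) (lineb_idx l) FGxy.
case/orP=> /andP[Fx Gy]; first by exists x, y.
by exists y, x; rewrite lineb_sym.
Qed.

Lemma is_line_of_X_form x y : is_line_of_X X (hplane_form x) (hplane_form y) <-> lineb x y.
Proof.
split=> l; last by apply/is_line_of_XE; exists x, y.
have [x' [y' [xx' yy' l']]] :=
  is_line_of_X_hplanes (hplane_form_nonzero x) (hplane_form_nonzero y) l.
by rewrite (same_hplane_form_inj (hplane_form_nonzero x) (same_hplane_refl _) xx')
  (same_hplane_form_inj (hplane_form_nonzero y) (same_hplane_refl _) yy').
Qed.

Lemma is_line_of_X_same_hplane F G F' G' :
  lf_nonzero F -> lf_nonzero G -> lf_nonzero F' -> lf_nonzero G' ->
  same_hplane F F' -> same_hplane G G' -> is_line_of_X X F G <-> is_line_of_X X F' G'.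
Proof.
move=> nzF nzG nzF' nzG' FF' GG'.
have FG := L2_same_hplane nzF nzG nzF' nzG' FF' GG'.
rewrite !is_line_of_XE; split=> -[x [y [l e]]]; exists x, y; split=> // p.
  by rewrite -FG e.
by rewrite FG e.
Qed.

End LineGraph.

Section Hexagons.
Variables (K : fieldType) (X : lines_data K).

Definition hyp6_counterexample (n : 'I_6 -> hplane X) : Prop :=
  (forall i j : 'I_6, j != i -> (j : nat) != (i.+1 %% 6)%N ->
     (i : nat) != (j.+1 %% 6)%N -> lineb (n i) (n j)) /\
  (forall u : 'I_6, ~~ lineb (n u) (n (ordS u))).

Lemma hyp6_starE : wf_lines X -> hyp6_star X <-> forall n, ~ hyp6_counterexample n.
Proof.
move=> wfX; split=> [hyp n [far near] | no_ce H nzH far].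
  have [i j ji j1 i1|u] :=
    hyp (fun u => hplane_form (n u)) (fun u => hplane_form_nonzero wfX _).
    by apply/(is_line_of_X_form wfX); apply: far.
  by move/(is_line_of_X_form wfX); apply/negP.
have [nu Hnu] : exists nu : 'I_6 -> hplane X,
    forall u, same_hplane (H u) (hplane_form (nu u)).
  apply: (@fin_all_exists _ (fun=> hplane X)
    (fun u x => same_hplane (H u) (hplane_form x))) => u.
  have [|x [y [Hx _ _]]] := is_line_of_X_hplanes wfX (nzH u) (nzH (ordS (ordS u))).
    by apply: far; case: u => -[|[|[|[|[|[|]]]]]].
  by exists x.
have lineE u v : is_line_of_X X (H u) (H v) <-> lineb (nu u) (nu v).
  rewrite (is_line_of_X_same_hplane X (nzH u) (nzH v) (hplane_form_nonzero wfX _)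
    (hplane_form_nonzero wfX _) (Hnu u) (Hnu v)).
  exact: is_line_of_X_form.
have [w l|none] := pickP (fun u => lineb (nu u) (nu (ordS u))).
  by exists w; apply/lineE.
case: (no_ce nu); split=> [i j ji j1 i1|u]; last by rewrite none.
by apply/lineE; apply: far.
Qed.

Definition hexagon_incidence (a1 a2 : 'I_(d1 X)) (b1 b2 : 'I_(d2 X))
    (c1 c2 : 'I_(d3 X)) : bool :=
  [&& [&& (a1, b1) \in U3 X, (a1, c1) \in U2 X & (b1, c1) \in U1 X],
      [&& (a2, b2) \in U3 X, (a2, c2) \in U2 X & (b2, c2) \in U1 X],
      [&& (a1, b2) \in U3 X, (a2, c1) \in U2 X & (b1, c2) \in U1 X] &
      [&& (a2, b1) \notin U3 X, (a1, c2) \notin U2 X & (b2, c1) \notin U1 X]].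

Definition hexagon (a1 a2 : 'I_(d1 X)) (b1 b2 : 'I_(d2 X)) (c1 c2 : 'I_(d3 X)) :
    'I_6 -> hplane X :=
  tnth [tuple inl (inl a1); inl (inl a2); inl (inr b1); inl (inr b2); inr c1; inr c2].

Lemma hexagon_counterexample a1 a2 b1 b2 c1 c2 :
  hexagon_incidence a1 a2 b1 b2 c1 c2 -> hyp6_counterexample (hexagon a1 a2 b1 b2 c1 c2).
Proof.
case/and4P=> /and3P[? ? ?] /and3P[? ? ?] /and3P[? ? ?] /and3P[? ? ?].
by split=> [[[|[|[|[|[|[|i]]]]]] ?] [[|[|[|[|[|[|j]]]]]] ?] | [[|[|[|[|[|[|i]]]]]] ?]].
Qed.

Ltac hexagon_witness :=
  match goal with
  | a : 'I_(d1 _), a' : 'I_(d1 _), b : 'I_(d2 _), b' : 'I_(d2 _),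
    c : 'I_(d3 _), c' : 'I_(d3 _) |- _ =>
      exists a, a', b, b', c, c'; apply/and4P; split; apply/and3P; split; assumption
  end.

Lemma hyp6_counterexample_incidence n : hyp6_counterexample n ->
  exists a1 a2 b1 b2 c1 c2, hexagon_incidence a1 a2 b1 b2 c1 c2.
Proof.
case=> far near.
pose o k : 'I_6 := iter k (@ordS 6) ord0.
have o60 : o 6 = o 0 by apply: val_inj.
have near50 := near (o 5); rewrite -[ordS (o 5)]/(o 6) o60 in near50.
move: (far (o 0) (o 2) isT isT isT) (far (o 2) (o 4) isT isT isT)
  (far (o 4) (o 0) isT isT isT) (far (o 1) (o 3) isT isT isT)
  (far (o 3) (o 5) isT isT isT) (far (o 5) (o 1) isT isT isT)
  (far (o 0) (o 3) isT isT isT) (far (o 1) (o 4) isT isT isT)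
  (far (o 2) (o 5) isT isT isT) (near (o 0)) (near (o 1)) (near (o 2))
  (near (o 3)) (near (o 4)) near50.
move: (n (o 0)) (n (o 1)) (n (o 2)) (n (o 3)) (n (o 4)) (n (o 5)) => n0 n1 n2 n3 n4 n5.
(* Lines only join distinct families, so most family assignments die at once. *)
case: n0 => [[?|?]|?]; case: n2 => [[?|?]|?] => //=;
case: n4 => [[?|?]|?] => //=; case: n1 => [[?|?]|?] => //=;
case: n3 => [[?|?]|?] => //=; case: n5 => [[?|?]|?] => //= *; hexagon_witness.
Qed.

Definition mu_pattern (a1 a2 : 'I_(d1 X)) (b1 b2 : 'I_(d2 X)) (c1 c2 : 'I_(d3 X)) :=
  (((mu a1 b1 c1, mu a1 b2 c1), (mu a2 b1 c1, mu a2 b2 c1)) == ((3, 2), (2, 2)))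
  && (((mu a1 b1 c2, mu a1 b2 c2), (mu a2 b1 c2, mu a2 b2 c2)) == ((2, 2), (2, 3))).

Lemma mu_patternE a1 a2 b1 b2 c1 c2 : mu_pattern a1 a2 b1 b2 c1 c2 =
  hexagon_incidence a1 a2 b1 b2 c1 c2 || hexagon_incidence a2 a1 b2 b1 c2 c1.
Proof.
rewrite /mu_pattern /hexagon_incidence /mu.
move: ((a1, b1) \in U3 X) ((a1, b2) \in U3 X) ((a2, b1) \in U3 X) ((a2, b2) \in U3 X)
  ((a1, c1) \in U2 X) ((a1, c2) \in U2 X) ((a2, c1) \in U2 X) ((a2, c2) \in U2 X)
  ((b1, c1) \in U1 X) ((b1, c2) \in U1 X) ((b2, c1) \in U1 X) ((b2, c2) \in U1 X).
by do 12!case.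
Qed.

End Hexagons.

Local Open Scope ring_scope.

Theorem proposition3p6 (K : closedFieldType) (hchar : [pchar K] =i pred0)
  (X : lines_data K) (hX : wf_lines X)
  (hF3 : resembles_ferrers (U3 X)) (hF2 : resembles_ferrers (U2 X))
  (hF1 : resembles_ferrers (U1 X)) :
  hyp6_star X <->
  (forall (a1 a2 : 'I_(d1 X)) (b1 b2 : 'I_(d2 X)) (c1 c2 : 'I_(d3 X)),
     ((mu a1 b1 c1, mu a1 b2 c1), (mu a2 b1 c1, mu a2 b2 c1)) != ((3, 2), (2, 2))
  \/ ((mu a1 b1 c2, mu a1 b2 c2), (mu a2 b1 c2, mu a2 b2 c2)) != ((2, 2), (2, 3)))%N.
Proof.
apply: (iff_trans (hyp6_starE hX)); split=> [no_ce a1 a2 b1 b2 c1 c2 | no_pattern n].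
  apply/orP; rewrite -negb_and -/(mu_pattern a1 a2 b1 b2 c1 c2) mu_patternE.
  by apply/negP => /orP[] /hexagon_counterexample; apply: no_ce.
case/hyp6_counterexample_incidence=> [a1 [a2 [b1 [b2 [c1 [c2 inc]]]]]].
have /orP := no_pattern a1 a2 b1 b2 c1 c2.
by rewrite -negb_and -/(mu_pattern a1 a2 b1 b2 c1 c2) mu_patternE inc.
Qed.
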